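(* Let $V$ be an $\mathcal{L}[\frac12]$-module on which $c$ acts as $0$, with a basis $\{x_k\mid k\in\frac12\mathbb{Z}\}$ and constants $a,b\in\mathbb{C}$, $f_{p,k},g_{n,k}\in\mathbb{C}$ such that for all $p\in\frac12+\mathbb{Z}$, $n\in\mathbb{Z}$, $k\in\frac12\mathbb{Z}$: $Y_px_k=f_{p,k}x_{k+p}$, $M_nx_k=g_{n,k}x_{k+n}$, $L_nx_k=(a+k+bn)x_{k+n}$ if $k\in\mathbb{Z}$ and $L_nx_k=(a+k+(b+\frac12)n)x_{k+n}$ if $k\in\frac12+\mathbb{Z}$. Then there exists $d_0\in\mathbb{C}$ such that $f_{p,k}=d_0$ for all $p,k\in\frac12+\mathbb{Z}$.
   Context: $\mathcal{L}[\frac12]$ is the complex Lie algebra with basis $\{L_m,Y_p,M_n,c\mid m,n\in\mathbb{Z},\ p\in\frac12+\mathbb{Z}\}$ and brackets $[L_m,L_{m'}]=(m'-m)L_{m+m'}+\delta_{m,-m'}\frac{m^3-m}{12}c$, $[L_m,Y_p]=(p-\frac m2)Y_{p+m}$, $[L_m,M_n]=nM_{n+m}$, $[Y_p,Y_{p'}]=(p'-p)M_{p+p'}$, $[Y_p,M_n]=[M_n,M_{n'}]=0$, $c$ central. *)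

From HB Require Import structures.
From mathcomp Require Import all_boot all_order all_algebra.
Set Implicit Arguments. Unset Strict Implicit. Unset Printing Implicit Defensive.
Import Order.TTheory GRing.Theory Num.Theory.
Local Open Scope ring_scope.

(* Conventions: a half-integer k in (1/2)Z is encoded by the integer K = 2k.
   Thus x_k is indexed by K : int; p in 1/2 + Z is encoded by an odd P = 2p;
   n in Z is encoded by itself.  f P K = f_{P/2, K/2}, g n K = g_{n, K/2}. *)

Definition oddZ (z : int) : bool := odd `|z|%N.

Definition half (C : numClosedFieldType) (z : int) : C := z%:~R / 2%:R.

(* coefficient of L_m x_k (k = K/2): L_m x_k = Lcoef a b m K * x_{k+m} *)
Definition Lcoef (C : numClosedFieldType) (a b : C) (m K : int) : C :=
  if oddZ K then a + half C K + (b + 1 / 2%:R) * m%:~R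
  else a + half C K + b * m%:~R.

(* The defining relations of L[1/2] evaluated on each basis vector x_k,
   with c acting as 0.  Since every generator maps x_k to a multiple of a
   single basis vector, and the x_k are linearly independent, the module
   axiom  u.(v.x) - v.(u.x) = [u,v].x  on basis vectors is exactly the
   following identity of coefficients. (Brackets [v,u] are the negatives
   of [u,v] and give the same identities.) *)
Definition L_half_module (C : numClosedFieldType) (a b : C)
    (f : int -> int -> C) (g : int -> int -> C) : Prop :=
  (* [L_m, L_m'] = (m'-m) L_{m+m'} + delta_{m,-m'} (m^3-m)/12 c, c = 0 *)
  (forall m m' K : int,
     Lcoef a b m (K + 2 * m') * Lcoef a b m' K
     - Lcoef a b m' (K + 2 * m) * Lcoef a b m K
     = (m' - m)%:~R * Lcoef a b (m + m') K) /\
  (* [L_m, Y_p] = (p - m/2) Y_{p+m} *)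
  (forall (m P K : int), oddZ P ->
     Lcoef a b m (K + P) * f P K - f P (K + 2 * m) * Lcoef a b m K
     = (half C P - half C m) * f (P + 2 * m) K) /\
  (* [L_m, M_n] = n M_{n+m} *)
  (forall m n K : int,
     Lcoef a b m (K + 2 * n) * g n K - g n (K + 2 * m) * Lcoef a b m K
     = n%:~R * g (n + m) K) /\
  (* [Y_p, Y_p'] = (p' - p) M_{p+p'} *)
  (forall P P' K : int, oddZ P -> oddZ P' ->
     f P (K + P') * f P' K - f P' (K + P) * f P K
     = (half C P' - half C P) * g ((P + P') %/ 2)%Z K) /\
  (* [Y_p, M_n] = 0 *)
  (forall P n K : int, oddZ P ->
     f P (K + 2 * n) * g n K - g n (K + P) * f P K = 0) /\
  (* [M_n, M_n'] = 0 *)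
  (forall n n' K : int,
     g n (K + 2 * n') * g n' K - g n' (K + 2 * n) * g n K = 0).

From Pilot Require Import Defs.
From HB Require Import structures.
From mathcomp Require Import all_boot all_order all_algebra zify ring.
Import Order.TTheory GRing.Theory Num.Theory.
Local Open Scope ring_scope.

(* Only [L_m, Y_p] = (p - m/2) Y_{p+m} is used.  With beta = b + 1/2 it
   reads, for p, k in 1/2 + Z and m in Z,
     (a + k + beta m) (f_{p,k+m} - f_{p,k}) = (m/2 - p) (f_{p+m,k} - f_{p,k}).
   For m = 2p the right-hand side vanishes, so f_{1/2,k+1} = f_{1/2,k}
   unless a + k + beta = 0.  At that exceptional k, instances with
   p in {-1/2, 1/2, 3/2} give (1 - 2 beta)(2 - 2 beta) delta = 0 and
   beta (14 beta - 11) delta = 0 for delta = f_{1/2,k+1} - f_{1/2,k}; these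
   polynomials have no common root, so delta = 0 and the column p = 1/2 is
   constant.  A constant column p makes every column p + m with m <> 2p
   constant, which reaches every p from p = 1/2 and p = -1/2. *)

Lemma oddZ_add_odd (K P : int) : oddZ K -> oddZ P -> oddZ (K + P) = false.
Proof. by rewrite /oddZ => oK oP; apply/negbTE; lia. Qed.

Lemma oddZ_add_double (K m : int) : oddZ (K + 2 * m) = oddZ K.
Proof. by rewrite /oddZ; lia. Qed.

Lemma eq0_no_common_root (R : numDomainType) (x d : R) :
  (1 - 2 * x) * (2 - 2 * x) * d = 0 -> x * (14 * x - 11) * d = 0 -> d = 0.
Proof.
move=> h1 h2.
have : 12 * d = (2 * (x * (14 * x - 11) * d) - 7 * ((1 - 2 * x) * (2 - 2 * x) * d))
                * (10 * x - 8) - 50 * ((1 - 2 * x) * (2 - 2 * x) * d) by ring.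
rewrite h1 h2 !mulr0 subrr mul0r subrr => /eqP.
by rewrite mulf_eq0 pnatr_eq0 => /eqP.
Qed.

Lemma int_shift_invariant {T : Type} (h : int -> T) :
  (forall n, h (n + 1) = h n) -> forall n, h n = h 0.
Proof.
move=> h1; elim/int_rec => [//|n <-|n <-]; first by rewrite intS addrC h1.
by rewrite -[- n%:Z](_ : - n.+1%:Z + 1 = _) ?h1 //; lia.
Qed.

Section YAction.

Variables (C : numClosedFieldType) (a b : C) (f : int -> int -> C).

Local Notation beta := (b + 1 / 2).

Hypothesis LY : forall m P K : int, oddZ P ->
  Lcoef a b m (K + P) * f P K - f P (K + 2 * m) * Lcoef a b m K
  = (Defs.half C P - Defs.half C m) * f (P + 2 * m) K.

Definition Y_residual (P Q K K' m : int) : C :=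
  (a + Defs.half C K + beta * m%:~R) * (f P K' - f P K)
  - (Defs.half C m - Defs.half C P) * (f Q K - f P K).

Lemma Y_residual_eq0 (P Q K K' m : int) : oddZ P -> oddZ K ->
  K' = K + 2 * m -> Q = P + 2 * m -> Y_residual P Q K K' m = 0.
Proof.
move=> oP oK -> ->.
have := LY m P K oP; rewrite /Lcoef oddZ_add_odd // oK.
move/eqP; rewrite -subr_eq0 => /eqP E.
by rewrite -[RHS]oppr0 -E /Y_residual /Defs.half; field.
Qed.

Lemma f_half_step_generic (K : int) : oddZ K -> a + Defs.half C K + beta != 0 ->
  f 1 (K + 2) = f 1 K.
Proof.
move=> oK hA; have /eqP := Y_residual_eq0 1 3 K (K + 2) 1 isT oK erefl erefl.
rewrite /Y_residual subrr mul0r subr0 mulr1 mulf_eq0 (negbTE hA) subr_eq0.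
by move=> /eqP.
Qed.

Section Degenerate.

(* [ha] says a + k + beta = 0, the case excluded by [f_half_step_generic]. *)
Variable K : int.
Hypotheses (oK : oddZ K) (ha : a = - Defs.half C K - beta).

Lemma degenerate_f_half_jump1 :
  (1 - 2 * beta) * (2 - 2 * beta) * (f 1 (K + 2) - f 1 K) = 0.
Proof.
rewrite [LHS](_ : _ = - (2 - 2 * beta) * Y_residual (-1) (-3) (K + 2) K (-1)
    - (1 - 2 * beta) * Y_residual (-1) (-3) (K + 4) (K + 2) (-1)
    + (1 - 2 * beta) * (2 - 2 * beta) * (Y_residual (-1) 1 K (K + 2) 1
                                         - Y_residual (-1) 1 (K + 2) (K + 4) 1));
  last by rewrite /Y_residual ha /Defs.half; field.
rewrite !Y_residual_eq0; first ring.
all: by move: oK; rewrite /oddZ; lia.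
Qed.

Lemma degenerate_f_three_half : (14 * beta - 11) * (f 3 K - f 1 K) = 0.
Proof.
rewrite [LHS](_ : _ = 2 * (1 + 2 * beta) * Y_residual 3 (-1) K (K - 4) (-2)
    - 6 * beta * Y_residual 3 1 (K - 2) (K - 4) (-1)
    + (3 - 6 * beta) * Y_residual 3 1 K (K - 2) (-1)
    - 6 * Y_residual 1 (-1) K (K - 2) (-1)
    + (1 - 10 * beta) * Y_residual (-1) 1 K (K + 2) 1);
  last by rewrite /Y_residual ha /Defs.half; field.
rewrite !Y_residual_eq0; first ring.
all: by move: oK; rewrite /oddZ; lia.
Qed.

Lemma degenerate_f_half_jump2 :
  beta * (14 * beta - 11) * (f 1 (K + 2) - f 1 K) = 0.
Proof.
rewrite [LHS](_ : _ = (14 * beta - 11) * (Y_residual (-1) 3 K (K + 4) 2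
    - beta * Y_residual (-1) 1 (K + 2) (K + 4) 1
    + (beta - 3 / 2) * Y_residual (-1) 1 K (K + 2) 1)
    + 3 / 2 * ((14 * beta - 11) * (f 3 K - f 1 K)));
  last by rewrite /Y_residual ha /Defs.half; field.
rewrite degenerate_f_three_half !Y_residual_eq0; first ring.
all: by move: oK; rewrite /oddZ; lia.
Qed.

End Degenerate.

Lemma f_half_step (K : int) : oddZ K -> f 1 (K + 2) = f 1 K.
Proof.
move=> oK; have [hA|hA] := eqVneq (a + Defs.half C K + beta) 0; last first.
  exact: f_half_step_generic.
have ha : a = - Defs.half C K - beta.
  by rewrite -[a](addrK (Defs.half C K + beta)) addrA hA add0r opprD.
apply/eqP; rewrite -subr_eq0; apply/eqP.
exact: eq0_no_common_root (degenerate_f_half_jump1 K oK ha)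
  (degenerate_f_half_jump2 K oK ha).
Qed.

Lemma f_half_const (K : int) : oddZ K -> f 1 K = f 1 1.
Proof.
move=> oK; have step n : f 1 (2 * (n + 1) + 1) = f 1 (2 * n + 1).
  by rewrite (_ : _ + 1 = 2 * n + 1 + 2) ?f_half_step //; rewrite /oddZ; lia.
have := int_shift_invariant (fun n => f 1 (2 * n + 1)) step ((K - 1) %/ 2)%Z.
by rewrite mulr0 add0r (_ : _ * _ + 1 = K) //; move: oK; rewrite /oddZ; lia.
Qed.

Lemma f_column_spread (P Q : int) (d : C) : oddZ P -> oddZ Q -> Q != 3 * P ->
  (forall K, oddZ K -> f P K = d) -> forall K, oddZ K -> f Q K = d.
Proof.
move=> oP oQ hQ hP K oK; set m := ((Q - P) %/ 2)%Z.
have eQ : Q = P + 2 * m by move: oP oQ; rewrite /oddZ /m; lia.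
have hm : Defs.half C m - Defs.half C P != 0.
  rewrite /Defs.half -mulrBl mulf_eq0 invr_eq0 pnatr_eq0 orbF -intrB intr_eq0.
  by rewrite subr_eq0; apply/eqP; move: hQ; rewrite eQ; lia.
have /eqP := Y_residual_eq0 P Q K (K + 2 * m) m oP oK erefl eQ.
rewrite /Y_residual !hP ?oddZ_add_double // subrr mulr0 sub0r oppr_eq0.
by rewrite mulf_eq0 (negbTE hm) subr_eq0 => /eqP.
Qed.

End YAction.

Theorem lemma3p4 (C : numClosedFieldType) (a b : C)
    (f : int -> int -> C) (g : int -> int -> C) :
  L_half_module a b f g ->
  exists d0 : C, forall P K : int, oddZ P -> oddZ K -> f P K = d0.
Proof.
case=> _ [LY _]; exists (f 1 1) => Q K oQ oK.
have col1 := @f_half_const C a b f LY.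
have spread := @f_column_spread C a b f LY.
have [->|hQ] := eqVneq Q 3; last exact: spread 1 Q _ isT oQ hQ col1 K oK.
have colN1 := spread 1 (-1) _ isT isT isT col1.
exact: spread (-1) 3 _ isT isT isT colN1 K oK.
Qed.
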